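(* Let $g=e^{-\psi}\colon\mathbb R^d\to[0,+\infty)$ satisfy the Basic Assumptions, let $m=\min\psi$, and assume $\psi(0)<m+1$. Then $\operatorname{supp}g$ is a star-like set with respect to $g$. Moreover, if $U\subset\mathbb R^d$ satisfies $\inf_{x\in U\cap\operatorname{supp}g}g(x)>0$, then the set $\{((u,g(u)),\bar v)\in\widetilde{\mathcal{CP}}(g,g):u\in U\}$ is bounded in $\mathbb R^{d+1}\times\mathbb R^{d+1}$.
   Context: $\operatorname{supp}g=\{x:g(x)>0\}$. Basic Assumptions: $g$ upper semi-continuous, log-concave, with finite positive integral, $\operatorname{supp}g$ bounded, origin in interior of $\operatorname{supp}g$. Lifting $\mathrm{lift}(f)=\{(x,y)\in\mathbb R^d\times\mathbb R:x\in\overline{\operatorname{supp}f},|y|\le f(x)\}$. Fréchet normal cone $N_A(a_0)=\{v:\forall\varepsilon>0\,\exists\delta>0:\langle v,a-a_0\rangle\le\varepsilon|a-a_0|\ \forall a\in A,|a-a_0|\le\delta\}$. Contact pairs $\mathcal{CP}(f,g)=\{(\bar u,\bar v):\bar u=(u,f(u)),u\in\overline{\operatorname{supp}f}\cap\overline{\operatorname{supp}g},f(u)=g(u),\bar v\in N_{\mathrm{lift}(f)}(\bar u)\cap N_{\mathrm{lift}(g)}(\bar u),\langle\bar v,\bar u\rangle=1\}$; reduced set $\widetilde{\mathcal{CP}}(f,g)$: those pairs with $f(u)\ne0$, or with $f(u)=g(u)=0$ and $\bar v=(v,0)$. Star-like: $U$ is star-like w.r.t. $g$ if for every $u\in U\cap\operatorname{supp}g$,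 $\langle(u,g(u)),\bar v\rangle>0$ for all nonzero $\bar v\in N_{\mathrm{lift}(g)}((u,g(u)))$. *)

(* Points of R^d are row vectors 'rV[R]_d,
   R : realType; points of R^(d+1) = R^d x R are pairs ('rV[R]_d * R). *)
From HB Require Import structures.
From mathcomp Require Import all_boot all_order all_algebra.
From mathcomp Require Import all_classical all_reals all_analysis.
Set Implicit Arguments. Unset Strict Implicit. Unset Printing Implicit Defensive.
Import Order.TTheory GRing.Theory Num.Theory.
Import numFieldNormedType.Exports.
Local Open Scope classical_set_scope.
Local Open Scope ring_scope.

Section Defs.
Variable R : realType.

Definition vdot (d : nat) (u v : 'rV[R]_d) : R := \sum_(i < d) u 0 i * v 0 i.
Definition vnorm (d : nat) (u : 'rV[R]_d) : R := Num.sqrt (vdot u u).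

Definition pt (d : nat) := ('rV[R]_d * R)%type.
Definition pdot (d : nat) (p q : pt d) : R := vdot p.1 q.1 + p.2 * q.2.
Definition pnorm (d : nat) (p : pt d) : R := Num.sqrt (pdot p p).
Definition psub (d : nat) (p q : pt d) : pt d := (p.1 - q.1, p.2 - q.2).

Definition supp (d : nat) (g : 'rV[R]_d -> R) : set 'rV[R]_d := [set x | 0 < g x].
Definition lift (d : nat) (f : 'rV[R]_d -> R) : set (pt d) :=
  [set p | closure (supp f) p.1 /\ `|p.2| <= f p.1].

Definition frechet_normal (d : nat) (A : set (pt d)) (a0 : pt d) : set (pt d) :=
  [set v | forall eps : R, 0 < eps -> exists2 delta : R, 0 < delta &
     forall a, A a -> pnorm (psub a a0) <= delta ->
       pdot v (psub a a0) <= eps * pnorm (psub a a0)].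

Definition contact_pairs (d : nat) (f g : 'rV[R]_d -> R) : set (pt d * pt d) :=
  [set uv | exists u : 'rV[R]_d,
     uv.1 = (u, f u) /\ closure (supp f) u /\ closure (supp g) u /\ f u = g u /\
     frechet_normal (lift f) uv.1 uv.2 /\
     frechet_normal (lift g) uv.1 uv.2 /\ pdot uv.2 uv.1 = 1].

Definition reduced_contact_pairs (d : nat) (f g : 'rV[R]_d -> R)
  : set (pt d * pt d) :=
  [set uv | contact_pairs f g uv /\
     (f uv.1.1 != 0 \/ (f uv.1.1 = 0 /\ g uv.1.1 = 0 /\ uv.2.2 = 0))].

Definition star_like (d : nat) (U : set 'rV[R]_d) (g : 'rV[R]_d -> R) : Prop :=
  forall u, U u -> supp g u ->
    forall v : pt d, v != (0, 0) -> frechet_normal (lift g) (u, g u) v ->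
      0 < pdot (u, g u) v.

Definition upper_semicontinuous (d : nat) (g : 'rV[R]_d -> R) : Prop :=
  forall x, forall eps : R, 0 < eps -> exists2 delta : R, 0 < delta &
    forall y, vnorm (y - x) < delta -> g y < g x + eps.

Definition log_concave (d : nat) (g : 'rV[R]_d -> R) : Prop :=
  forall x y (l : R), 0 <= l <= 1 ->
    (g x) `^ l * (g y) `^ (1 - l) <= g (l *: x + (1 - l) *: y).

Definition bounded_set (d : nat) (A : set 'rV[R]_d) : Prop :=
  exists M : R, forall x, A x -> vnorm x <= M.

(* Lebesgue integral over R^d, as the iterated (one-dimensional) Lebesgue
   integral; by Tonelli this is the Lebesgue integral for nonnegative
   measurable functions. *)
Definition vcons (d : nat) (t : R) (x : 'rV[R]_d) : 'rV[R]_d.+1 :=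
  \row_(i < d.+1) (if unlift ord0 i is Some j then x 0 j else t).

Fixpoint integral_Rd (d : nat) : ('rV[R]_d -> \bar R) -> \bar R :=
  match d return ('rV[R]_d -> \bar R) -> \bar R with
  | 0 => fun f => f 0
  | d'.+1 => fun f =>
      (\int[@lebesgue_measure R]_t integral_Rd (fun x : 'rV[R]_d' => f (vcons t x)))%E
  end.

Definition basic_assumptions (d : nat) (g : 'rV[R]_d -> R) : Prop :=
  (forall x, 0 <= g x) /\
  upper_semicontinuous g /\
  log_concave g /\
  (0 < integral_Rd (fun x => (g x)%:E) < +oo)%E /\
  bounded_set (supp g) /\
  interior (supp g) 0.

End Defs.

(* Everything rests on one inequality for Frechet normals to the lifting of a
   log-concave g: at a base point (u, g u) with u in the support, a normal
   (v1, t) satisfies t >= 0 and, for every w in the support,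
     <v1, w - u> <= t g(u) max(0, ln g(u) - ln g(w))          [N]
   because, by log-concavity, the lifting contains the initial part of the
   segment from (u, g u) in the direction (w - u, -g(u) max(...)); at a zero
   u of g in the closure of the support, <v1, w - u> <= 0 instead.
   The hypothesis on psi says ln g(x) <= ln g(0) + 1 - eta for some
   eta in (0, 1], and 0 is interior to the support, so the axis points
   +-rho e_i lie in the support.  Testing [N] against w = 0 gives
   star-likeness when t > 0 and, for normalized contact normals, a bound
   t g(u) <= 1 / eta; testing [N] against the axis points gives star-likeness
   when t = 0 and bounds on every coordinate of v1.  The base points are
   bounded since the support is bounded and g is bounded above.
   The file develops Euclidean bookkeeping on R^d x R, the normal-cone
   inequalities for log-concave functions, the two claims under explicit
   hypotheses (section ContactBounds), and finally the theorem. *)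

From Pilot Require Import Defs.
From HB Require Import structures.
From mathcomp Require Import all_boot all_order all_algebra.
From mathcomp Require Import all_classical all_reals all_analysis.
From mathcomp Require Import ring lra.
Import Order.TTheory GRing.Theory Num.Theory.
Import numFieldNormedType.Exports.
Local Open Scope classical_set_scope.
Local Open Scope ring_scope.
Set Implicit Arguments. Unset Strict Implicit. Unset Printing Implicit Defensive.

Section InnerProduct.
Variables (R : realType) (d : nat).
Implicit Types (u v w : 'rV[R]_d) (p : pt R d).

Lemma vdotC u v : vdot u v = vdot v u.
Proof. by apply: eq_bigr => i _; rewrite mulrC. Qed.

Lemma vdotBr u v w : vdot u (v - w) = vdot u v - vdot u w.
Proof.
rewrite /vdot -sumrB; apply: eq_bigr => i _.
by rewrite !mxE mulrDr mulrN.
Qed.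

Lemma vdotZr (c : R) u v : vdot u (c *: v) = c * vdot u v.
Proof. by rewrite /vdot mulr_sumr; apply: eq_bigr => i _; rewrite mxE mulrCA. Qed.

Lemma vdot0r u : vdot u 0 = 0.
Proof. by rewrite /vdot big1 // => i _; rewrite mxE mulr0. Qed.

Lemma sqr_coord_le_vdot u i : u 0 i ^+ 2 <= vdot u u.
Proof.
rewrite /vdot (bigD1 i) //= expr2 lerDl sumr_ge0 // => j _.
by rewrite -expr2 sqr_ge0.
Qed.

Lemma coord_le_vnorm u i : `|u 0 i| <= vnorm u.
Proof. by rewrite -sqrtr_sqr ler_wsqrtr // sqr_coord_le_vdot. Qed.

(* The matrix norm of 'rV[R]_d is the sup norm, which dominates coordinates. *)
Lemma coord_le_mxnorm u i : `|u 0 i| <= `|u|.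
Proof.
rewrite [leRHS]/Num.Def.normr /= mx_normrE.
by apply/bigmax_geP; right; exists (0, i).
Qed.

Lemma pnorm_ge0 p : 0 <= pnorm p.
Proof. exact: sqrtr_ge0. Qed.

Lemma pnormZ (s : R) p : 0 <= s ->
  pnorm ((s *: p.1, s * p.2) : pt R d) = s * pnorm p.
Proof.
move=> s0; rewrite /pnorm /pdot /= vdotZr vdotC vdotZr.
have -> : s * (s * vdot p.1 p.1) + s * p.2 * (s * p.2) =
  s ^+ 2 * (vdot p.1 p.1 + p.2 * p.2) by ring.
by rewrite sqrtrM ?sqr_ge0 // sqrtr_sqr ger0_norm.
Qed.

Lemma pnorm_le_coord p (a : 'I_d -> R) (b : R) :
  (forall i, `|p.1 0 i| <= a i) -> `|p.2| <= b ->
  pnorm p <= Num.sqrt (\sum_(i < d) a i ^+ 2 + b ^+ 2).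
Proof.
have sqr_le (x y : R) : `|x| <= y -> x * x <= y ^+ 2.
  by rewrite ler_norml => /andP[? ?]; nra.
move=> ha hb; apply: ler_wsqrtr; apply: lerD; last exact: sqr_le.
by apply: ler_sum => i _; apply: sqr_le.
Qed.

Definition axis_point (r : R) (i : 'I_d) : 'rV[R]_d := r *: delta_mx 0 i.

Lemma vdot_axis u (r : R) i : vdot u (axis_point r i) = r * u 0 i.
Proof.
rewrite vdotZr; congr (_ * _); rewrite /vdot (bigD1 i) //= big1.
  by rewrite mxE !eqxx mulr1 addr0.
by move=> j /negbTE ji; rewrite mxE ji andbF mulr0.
Qed.

Lemma norm_axis_point (r : R) i : `|axis_point r i| <= `|r|.
Proof.
rewrite normrZ ler_piMr // [X in X <= _]/Num.Def.normr /= mx_normrE.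
apply: bigmax_le => // -[a j] _ /=.
by rewrite mxE; case: (_ && _); rewrite ?normr1 ?normr0.
Qed.

Lemma coord_bound_of_axis (x rho K : R) : 0 < rho ->
  rho * x <= K -> - rho * x <= K -> `|x| <= K / rho.
Proof.
move=> rho0 hp hn; rewrite ler_pdivlMr //.
by case: (lerP 0 x) => x0; [rewrite ger0_norm | rewrite ltr0_norm]; nra.
Qed.

Lemma interior_axis_points (A : set 'rV[R]_d) : interior A 0 ->
  exists2 rho : R, 0 < rho &
    forall i, A (axis_point rho i) /\ A (axis_point (- rho) i).
Proof.
rewrite /interior /= -nbhs_nbhs_norm => -[e e0 He].
have rho0 : 0 < e / 2 by rewrite divr_gt0.
have inA (r : R) i : `|r| = e / 2 -> A (axis_point r i).
  move=> hr; apply: He => /=; rewrite sub0r normrN.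
  by apply: le_lt_trans (norm_axis_point r i) _; rewrite hr; lra.
exists (e / 2) => // i; split; apply: inA; rewrite ?normrN gtr0_norm //.
Qed.

Lemma closure_coord_bound (A : set 'rV[R]_d) (B : R) x i :
  (forall y, A y -> vnorm y <= B) -> closure A x -> `|x 0 i| <= B + 1.
Proof.
move=> hB cx.
have N : nbhs x [set y | `|x - y| < 1].
  by rewrite -nbhs_nbhs_norm; exists 1; [exact: ltr01 | by []].
have [y [Ay /= xy]] := cx _ N.
have hy := le_trans (coord_le_vnorm y i) (hB y Ay).
have hxy := coord_le_mxnorm (x - y) i; rewrite !mxE in hxy.
have := ler_normD (x 0 i - y 0 i) (y 0 i); rewrite subrK; lra.
Qed.

End InnerProduct.

Lemma le0_of_small_multiples (R : realType) (x c : R) : 0 <= c ->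
  (forall e, 0 < e -> x <= e * c) -> x <= 0.
Proof.
move=> c0 H; rewrite leNgt; apply/negP => x0.
have c1 : 0 < c + 1 by lra.
have := H (x / (c + 1)) (divr_gt0 x0 c1).
rewrite mulrAC ler_pdivlMr // => h; nra.
Qed.

Lemma normal_cone_feasible_dir (R : realType) d (A : set (pt R d))
    (a0 v p : pt R d) (s0 : R) :
  0 < s0 -> (forall s, 0 < s -> s <= s0 -> A (a0.1 + s *: p.1, a0.2 + s * p.2)) ->
  frechet_normal A a0 v -> pdot v p <= 0.
Proof.
move=> s00 HA Hv; apply: (le0_of_small_multiples (pnorm_ge0 p)) => e e0.
have [del del0 Hd] := Hv e e0.
have N1 : 0 < pnorm p + 1 by have := pnorm_ge0 p; lra.
set s := Num.min s0 (del / (pnorm p + 1)).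
have s0p : 0 < s by rewrite lt_min s00 divr_gt0.
have ss0 : s <= s0 by rewrite ge_min lexx.
have sd : s * (pnorm p + 1) <= del by rewrite -ler_pdivlMr // ge_min lexx orbT.
have Hps : psub (a0.1 + s *: p.1, a0.2 + s * p.2) a0 = (s *: p.1, s * p.2).
  by rewrite /psub /=; congr pair; rewrite addrC addKr.
have Hn : pnorm (psub (a0.1 + s *: p.1, a0.2 + s * p.2) a0) <= del.
  by rewrite Hps (pnormZ _ (ltW s0p)); have := pnorm_ge0 p; nra.
have := Hd _ (HA s s0p ss0) Hn; rewrite Hps (pnormZ _ (ltW s0p)).
have -> : pdot v (s *: p.1, s * p.2) = s * pdot v p by rewrite /pdot /= vdotZr; ring.
by rewrite mulrCA ler_pM2l.
Qed.

Section LogConcave.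
Variables (R : realType) (d : nat) (g : 'rV[R]_d -> R).
Hypothesis lc : log_concave g.

Lemma log_concave_segment (w u : 'rV[R]_d) (s : R) :
  0 < g w -> 0 < g u -> 0 <= s <= 1 ->
  g u * expR (s * (ln (g w) - ln (g u))) <= g (s *: w + (1 - s) *: u).
Proof.
move=> gw gu s01; apply: le_trans (lc w u s01).
rewrite /powR (gt_eqF gw) (gt_eqF gu).
have {1}-> : g u = expR (ln (g u)) by rewrite lnK // posrE.
by rewrite -!expRD ler_expR; lra.
Qed.

Lemma supp_segment (w u : 'rV[R]_d) (s : R) : 0 < g w -> 0 < g u ->
  0 <= s <= 1 -> 0 < g (s *: w + (1 - s) *: u).
Proof.
move=> gw gu s01; apply: lt_le_trans (log_concave_segment gw gu s01).
by rewrite mulr_gt0 // expR_gt0.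
Qed.

Lemma closure_supp_segment (u w : 'rV[R]_d) (s : R) :
  closure (supp g) u -> 0 < g w -> 0 < s <= 1 ->
  closure (supp g) (s *: w + (1 - s) *: u).
Proof.
move=> cu gw /andP[s0 s1] B; rewrite -nbhs_nbhs_norm => -[e e0 He].
have Nu : nbhs u [set y | `|u - y| < e] by rewrite -nbhs_nbhs_norm; exists e.
have [y [sy /= uy]] := cu _ Nu.
exists (s *: w + (1 - s) *: y); split.
  by apply: supp_segment => //; rewrite s1 ltW.
apply: He => /=.
have -> : s *: w + (1 - s) *: u - (s *: w + (1 - s) *: y) = (1 - s) *: (u - y).
  by apply/matrixP => i j; rewrite !mxE; ring.
rewrite normrZ ger0_norm; last by lra.
by have := normr_ge0 (u - y); nra.
Qed.

Lemma segment_param (u w : 'rV[R]_d) (s : R) :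
  u + s *: (w - u) = s *: w + (1 - s) *: u.
Proof. by apply/matrixP => i j; rewrite !mxE; ring. Qed.

(* Normals to the lifting at a point of the support point upwards: the
   lifting contains the vertical segment below (u, g u). *)
Lemma normal_height_ge0 (u : 'rV[R]_d) (v : pt R d) :
  0 < g u -> frechet_normal (Defs.lift g) (u, g u) v -> 0 <= v.2.
Proof.
move=> gu Hv.
have := normal_cone_feasible_dir (p := (0, -1)) gu _ Hv.
rewrite /pdot /= vdot0r add0r mulrN1 oppr_le0; apply => s s0 sg.
rewrite /Defs.lift /= scaler0 addr0; split; first by apply: subset_closure; exact: gu.
by rewrite ger0_norm; lra.
Qed.

(* It tests v against the direction (w - u, - g(u) K), K the max above,
   which stays below the graph by log-concavity since 1 - sK <= exp(-sK). *)
Lemma normal_pairing_supp (u w : 'rV[R]_d) (v : pt R d) :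
  0 < g u -> 0 < g w -> frechet_normal (Defs.lift g) (u, g u) v ->
  vdot v.1 (w - u) <= v.2 * g u * Num.max 0 (ln (g u) - ln (g w)).
Proof.
move=> gu gw Hv.
set K := Num.max 0 _.
have K0 : 0 <= K by rewrite le_max lexx.
have KL : ln (g u) - ln (g w) <= K by rewrite le_max lexx orbT.
have K1 : 0 < 1 + K by lra.
have K1V : 0 < (1 + K)^-1 by rewrite invr_gt0.
have := normal_cone_feasible_dir (p := (w - u, - (g u * K))) K1V _ Hv.
rewrite /pdot /= mulrN subr_le0 mulrA; apply => s s0.
rewrite -div1r ler_pdivlMr // => sK.
have s01 : 0 <= s <= 1 by apply/andP; split; nra.
rewrite /Defs.lift /= segment_param; split.
  by apply: subset_closure; apply: supp_segment.
have e1 := expR_ge1Dx (s * - K).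
have e2 : expR (s * - K) <= expR (s * (ln (g w) - ln (g u))).
  by rewrite ler_expR ler_wpM2l //; lra.
have := log_concave_segment gw gu s01.
rewrite ger0_norm; last by nra.
by apply: le_trans; nra.
Qed.

(* At a zero of g in the closure of the support, every normal supports the
   support: the horizontal segments towards points of the support lie in the
   lifting (log-concavity makes g nonnegative on them). *)
Lemma normal_pairing_boundary (u w : 'rV[R]_d) (v : pt R d) :
  closure (supp g) u -> g u = 0 -> 0 < g w ->
  frechet_normal (Defs.lift g) (u, g u) v -> vdot v.1 (w - u) <= 0.
Proof.
move=> cu gu0 gw Hv.
have := normal_cone_feasible_dir (p := (w - u, 0)) ltr01 _ Hv.
rewrite /pdot /= mulr0 addr0; apply => s s0 s1.
rewrite /Defs.lift /= segment_param mulr0 addr0 gu0 normr0; split.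
  by apply: closure_supp_segment => //; rewrite s0.
apply: le_trans (lc w u _); first by rewrite mulr_ge0 ?powR_ge0.
by rewrite ltW.
Qed.

End LogConcave.

Lemma log_gap_of_min (R : realType) d (g : 'rV[R]_d -> R)
    (psi : 'rV[R]_d -> \bar R) (m : \bar R) :
  (forall x, (g x)%:E = expeR (- psi x)%E) -> (exists x, psi x = m) ->
  (forall x, (m <= psi x)%E) -> (psi 0%R < m + 1%:E)%E -> 0 < g 0 ->
  exists2 eta : R, 0 < eta <= 1 &
    forall x, 0 < g x -> ln (g x) <= ln (g 0) + 1 - eta.
Proof.
move=> hg [x0 hx0] hm h0 g0.
have psi_fin x : 0 < g x -> psi x = (- ln (g x))%:E.
  have := hg x; case: (psi x) => [q [->]| [gx0]|] //=.
  - by rewrite expRK opprK.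
  - by rewrite gx0 ltxx.
have hp0 := psi_fin _ g0.
case Em: m => [m'| |].
- exists (Num.min 1 (m' + 1 + ln (g 0))).
    rewrite lt_min ge_min lexx ltr01 /=.
    by move: h0; rewrite hp0 Em -EFinD lte_fin; lra.
  move=> x gx; have := hm x; rewrite psi_fin // Em lee_fin.
  by have : Num.min 1 (m' + 1 + ln (g 0)) <= m' + 1 + ln (g 0); [rewrite ge_min lexx orbT | lra].
- by have := hm 0; rewrite Em hp0 leNgt ltry.
- by have := hg x0; rewrite hx0 Em.
Qed.

(* Reduced contact pairs of (g, g) for a nonnegative g: the base point is
   on the graph, either inside the support or at a zero of g with a
   horizontal normal, and the normal is normalized by <v, (u, g u)> = 1. *)
Definition normalized_contact (R : realType) d (g : 'rV[R]_d -> R)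
    (u : 'rV[R]_d) (v : pt R d) : Prop :=
  [/\ closure (supp g) u, frechet_normal (Defs.lift g) (u, g u) v,
      pdot v (u, g u) = 1 & 0 < g u \/ g u = 0 /\ v.2 = 0].

Lemma reduced_contact_normalized (R : realType) d (g : 'rV[R]_d -> R)
    (uv : pt R d * pt R d) :
  (forall x, 0 <= g x) -> reduced_contact_pairs g g uv ->
  uv.1 = (uv.1.1, g uv.1.1) /\ normalized_contact g uv.1.1 uv.2.
Proof.
move=> gge0 [[u [-> [cu [_ [_ [Hv [_ Hpd]]]]]]] Hred]; split => //.
split => //; case: Hred => /= [gu | [gu0 [_ t0]]]; last by right.
by left; rewrite lt_def gu gge0.
Qed.

Section ContactBounds.
Variables (R : realType) (d : nat) (g : 'rV[R]_d -> R).
Hypothesis lc : log_concave g.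
Variables (eta rho : R).
Hypotheses (eta_gt0 : 0 < eta) (eta_le1 : eta <= 1) (g0_gt0 : 0 < g 0).
Hypothesis log_gap : forall x, 0 < g x -> ln (g x) <= ln (g 0) + 1 - eta.
Hypothesis rho_gt0 : 0 < rho.
Hypothesis axis_supp :
  forall i, supp g (axis_point rho i) /\ supp g (axis_point (- rho) i).

Lemma log_ratio_origin (u : 'rV[R]_d) :
  0 < g u -> Num.max 0 (ln (g u) - ln (g 0)) <= 1 - eta.
Proof. by move=> gu; rewrite ge_max subr_ge0 eta_le1 /=; have := log_gap gu; lra. Qed.

Lemma normal_pairing_origin (u : 'rV[R]_d) (v : pt R d) :
  0 < g u -> frechet_normal (Defs.lift g) (u, g u) v ->
  - vdot v.1 u <= v.2 * g u * (1 - eta).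
Proof.
move=> gu Hv; have := normal_pairing_supp lc gu g0_gt0 Hv.
rewrite vdotBr vdot0r sub0r => /le_trans; apply.
rewrite ler_wpM2l ?log_ratio_origin // mulr_ge0 ?(ltW gu) //.
exact: normal_height_ge0 Hv.
Qed.

(* For a normal
   (v1, t) at (u, g u): if t > 0, pairing with the origin gives
   <(u, g u), v> >= t g(u) eta; if t = 0, pairing with the axis points
   shows that <u, v1> <= 0 would force v1 = 0. *)
Theorem supp_star_like : star_like (supp g) g.
Proof.
move=> u _ gu [v1 t] v0 Hv; rewrite /pdot /= vdotC.
have t0 : 0 <= t := normal_height_ge0 gu Hv.
have horig := normal_pairing_origin gu Hv; rewrite /= in horig.
have [tp | t_le0] := ltrP 0 t.
  have tgu : 0 < t * g u by rewrite mulr_gt0.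
  have := mulr_gt0 tgu eta_gt0; lra.
have {horig} t_eq0 : t = 0 by apply/le_anti; rewrite t_le0 t0.
subst t.
rewrite mulr0 addr0 ltNge; apply: contraNN v0 => v1u.
have coord0 i : `|v1 0 i| <= 0.
  rewrite -(mul0r rho^-1); apply: coord_bound_of_axis => //.
    have := normal_pairing_supp lc gu (axis_supp i).1 Hv.
    by rewrite /= vdotBr vdot_axis !mul0r; lra.
  have := normal_pairing_supp lc gu (axis_supp i).2 Hv.
  by rewrite /= vdotBr vdot_axis !mul0r; lra.
apply/eqP; congr pair; apply/matrixP => a i; rewrite ord1 mxE.
by apply/normr0_eq0/le_anti; rewrite coord0 normr_ge0.
Qed.

Lemma contact_height_scaled (u : 'rV[R]_d) (v : pt R d) :
  0 < g u -> frechet_normal (Defs.lift g) (u, g u) v -> pdot v (u, g u) = 1 ->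
  v.2 * g u * eta <= 1.
Proof.
move=> gu Hv; rewrite /pdot /= => Hpd.
have := normal_pairing_origin gu Hv; lra.
Qed.

Lemma normalized_contact_dir (u w : 'rV[R]_d) (v : pt R d) (lam : R) :
  normalized_contact g u v -> 0 < g w -> lam <= ln (g w) ->
  vdot v.1 w <= 1 + Num.max 0 (ln (g 0) + 1 - eta - lam) / eta.
Proof.
move=> [cu Hv Hpd [gu | [gu0 t0]]] gw lam_le.
- have hw := normal_pairing_supp lc gu gw Hv.
  have tgu : 0 <= v.2 * g u by rewrite mulr_ge0 ?(ltW gu) // (normal_height_ge0 gu Hv).
  have hK : Num.max 0 (ln (g u) - ln (g w)) <= Num.max 0 (ln (g 0) + 1 - eta - lam).
    by apply: le_max2 => //; have := log_gap gu; lra.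
  have hsc := contact_height_scaled gu Hv Hpd.
  have hD : v.2 * g u * Num.max 0 (ln (g 0) + 1 - eta - lam) <=
            Num.max 0 (ln (g 0) + 1 - eta - lam) / eta.
    have D0 : 0 <= Num.max 0 (ln (g 0) + 1 - eta - lam) by rewrite le_max lexx.
    by rewrite ler_pdivlMr //; nra.
  move: Hpd hw; rewrite /pdot vdotBr /= => Hpd hw.
  have := ler_wpM2l tgu hK; lra.
- have := normal_pairing_boundary lc cu gu0 gw Hv.
  move: Hpd; rewrite /pdot vdotBr t0 mul0r addr0 /= => Hpd.
  have : 0 <= Num.max 0 (ln (g 0) + 1 - eta - lam) / eta.
    by rewrite divr_ge0 ?le_max ?lexx // ltW.
  lra.
Qed.

Lemma normalized_contact_height (u : 'rV[R]_d) (v : pt R d) (c : R) :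
  normalized_contact g u v -> 0 < c -> (0 < g u -> c <= g u) ->
  `|v.2| <= (c * eta)^-1.
Proof.
move=> [_ Hv Hpd [gu | [_ ->]]] c0 hc; last by rewrite normr0 invr_ge0 mulr_ge0 // ltW.
rewrite ger0_norm ?(normal_height_ge0 gu Hv) // -div1r ler_pdivlMr ?mulr_gt0 //.
have := contact_height_scaled gu Hv Hpd; have := normal_height_ge0 gu Hv.
have := hc gu; nra.
Qed.

Definition axis_min (i : 'I_d) : R :=
  Num.min (g (axis_point rho i)) (g (axis_point (- rho) i)).

Lemma axis_min_gt0 i : 0 < axis_min i.
Proof. by rewrite lt_min (axis_supp i).1 (axis_supp i).2. Qed.

Lemma normalized_contact_coord (u : 'rV[R]_d) (v : pt R d) i :
  normalized_contact g u v ->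
  `|v.1 0 i| <= (1 + Num.max 0 (ln (g 0) + 1 - eta - ln (axis_min i)) / eta) / rho.
Proof.
move=> hn; apply: coord_bound_of_axis => //; rewrite -vdot_axis.
  apply: normalized_contact_dir hn (axis_supp i).1 _.
  by rewrite ler_ln ?posrE ?axis_min_gt0 ?(axis_supp i).1 // ge_min lexx.
apply: normalized_contact_dir hn (axis_supp i).2 _.
by rewrite ler_ln ?posrE ?axis_min_gt0 ?(axis_supp i).2 // ge_min lexx orbT.
Qed.

Lemma g_le_peak x : g x <= expR (ln (g 0) + 1 - eta).
Proof.
have [gx | ] := ltrP 0 (g x); last by move/le_trans; apply; rewrite ltW ?expR_gt0.
by rewrite -[g x]lnK ?posrE // ler_expR log_gap.
Qed.

(* Nonnegativity of g is needed to read off reduced contact pairs. *)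
Hypothesis gge0 : forall x, 0 <= g x.

(* The base points lie in the bounded closure of the
   support below the peak of g; the normals are bounded coordinatewise. *)
Theorem reduced_contact_pairs_bounded (B c : R) (U : set 'rV[R]_d) :
  (forall x, supp g x -> vnorm x <= B) -> 0 < c ->
  (forall x, U x -> supp g x -> c <= g x) ->
  exists M : R, forall uv : pt R d * pt R d,
    reduced_contact_pairs g g uv -> U uv.1.1 ->
    pnorm uv.1 <= M /\ pnorm uv.2 <= M.
Proof.
move=> hB c0 hc.
pose G := expR (ln (g 0) + 1 - eta).
pose Bv i := (1 + Num.max 0 (ln (g 0) + 1 - eta - ln (axis_min i)) / eta) / rho.
pose M1 := Num.sqrt (\sum_(i < d) (B + 1) ^+ 2 + G ^+ 2).
pose M2 := Num.sqrt (\sum_(i < d) Bv i ^+ 2 + (c * eta)^-1 ^+ 2).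
exists (Num.max M1 M2) => uv /(reduced_contact_normalized gge0) [-> hn] Uu.
have [cu _ _ _] := hn.
split; [apply: (@le_trans _ _ M1) | apply: (@le_trans _ _ M2)];
  rewrite ?le_max ?lexx ?orbT //.
  apply: (pnorm_le_coord (a := fun=> B + 1)) => [i | /=].
    exact: closure_coord_bound hB cu.
  by rewrite ger0_norm ?gge0 //; apply: g_le_peak.
apply: (pnorm_le_coord (a := Bv)) => [i | ].
  exact: normalized_contact_coord hn.
by apply: normalized_contact_height hn c0 _; apply: hc.
Qed.

End ContactBounds.

Theorem mainTheorem16 (R : realType) (d : nat) (g : 'rV[R]_d -> R)
    (psi : 'rV[R]_d -> \bar R) (m : \bar R) :
  basic_assumptions g ->
  (forall x, (g x)%:E = expeR (- psi x)%E) ->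
  (exists x, psi x = m) -> (forall x, (m <= psi x)%E) ->
  (psi (0%R : 'rV[R]_d) < m + 1%:E)%E ->
  star_like (supp g) g /\
  (forall U : set 'rV[R]_d,
     (exists2 c : R, 0 < c & forall x, U x -> supp g x -> c <= g x) ->
     exists M : R, forall uv : pt R d * pt R d,
       reduced_contact_pairs g g uv -> U uv.1.1 ->
       pnorm uv.1 <= M /\ pnorm uv.2 <= M).
Proof.
move=> [gge0 [_ [lc [_ [[B hB] int0]]]]] hg hmin hm h0.
have g0 : 0 < g 0 := nbhs_singleton int0.
have [eta /andP[eta0 eta1] gap] := log_gap_of_min hg hmin hm h0 g0.
have [rho rho0 axes] := interior_axis_points int0.
split; first exact (supp_star_like lc eta0 eta1 g0 gap rho0 axes).
move=> U [c c0 hc].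
exact (reduced_contact_pairs_bounded lc eta0 eta1 g0 gap rho0 axes gge0 hB c0 hc).
Qed.
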